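(* Let $n\in\mathbb{N}$ and let $\mathcal{H}_n$ be such that the random array $M^{(n)}=\{\mu_{j,l}:1\le j\le n+1,1\le l\le 2^j-1\}$ of the $\mathrm{DSBA}(n,\mathcal{H}_n)$ construction almost surely has distinct level $n$ entries $\mu_{n,1},\ldots,\mu_{n,2^n-1}$ and coincides with the first $n+1$ rows of the SBA of some probability measure with a regular level $n$ SBA. Then the resulting random measure $G=\mathcal{T}_n(M^{(n)})$ is a measurable random element of $\mathcal{P}(\Theta)$ endowed with the Borel $\sigma$-algebra of the weak topology, and, for every $p\in[1,\infty)$, of $\mathcal{P}_p(\Theta)$ endowed with the Borel $\sigma$-algebra of the topology induced by the Wasserstein distance $W_p$.
   Context: $\Theta\subseteq\mathbb{R}$ is $\mathbb{R}$, a closed half-line, or a compact interval with nonempty interior. SBA of a measure $G$ with finite mean: $\mu_{1,1}=\int\theta\,dG$; $\mu_{j,2l}=\mu_{j-1,l}$, $\mu_{j,2l-1}=b_G(\mu_{j-1,l-1},\mu_{j-1,l}]$ where $b_G(a_1,a_2]=\int_{(a_1,a_2]}\theta\,dG/(G(a_2)-G(a_1))$ (or $a_1$ if the mass is zero), $\mu_{j,0}=\inf\Theta$, $\mu_{j,2^j}=\sup\Theta$; a regular level $n$ SBA means $\mu_{n,1},\ldots,\mu_{n,2^n-1}$ distinct. $\mathrm{DSBA}(n,\mathcal{H}_n)$, for $\mathcal{H}_n=\{H_{j,2l-1}:1\le j\le n+1,1\le l\le 2^{j-1}\}$ probability measures on $\Theta$: $\mu_{1,1}\sim H_{1,1}$;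 for $j=2,\ldots,n+1$, $\mu_{j,2l}=\mu_{j-1,l}$ and $\mu_{j,2l-1}$ independently from $H_{j,2l-1}$ conditioned to $(\mu_{j-1,l-1},\mu_{j-1,l}]$. The map $\mathcal{T}_n$ sends an array to $\sum_{l=1}^{2^n}w_{n,l}\delta_{\mu_{n+1,2l-1}}$ with $w_{n,l}=F(\mu_{n,l})-F(\mu_{n,l-1})$, where $F(\mu_{j,0})=0$, $F(\mu_{j,2^j})=1$, $F(\mu_{j,2l})=F(\mu_{j-1,l})$ and, for $1\le j\le n$, $F(\mu_{j,2l-1})=F(\mu_{j-1,l-1})+[F(\mu_{j-1,l})-F(\mu_{j-1,l-1})]\frac{\mu_{j+1,4l-1}-\mu_{j+1,4l-2}}{\mu_{j+1,4l-1}-\mu_{j+1,4l-3}}$ ($0/0=1$). *)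

From HB Require Import structures.
From mathcomp Require Import all_boot all_order all_algebra.
From mathcomp Require Import all_classical all_reals all_analysis.
Set Implicit Arguments. Unset Strict Implicit. Unset Printing Implicit Defensive.
Import Order.TTheory GRing.Theory Num.Theory.
Import numFieldNormedType.Exports.
Local Open Scope classical_set_scope.
Local Open Scope ring_scope.

Section Defs.
Variable R : realType.

Definition is_Theta (Th : set R) : Prop :=
  Th = setT \/
  (exists a : R, Th = [set x | a <= x]) \/
  (exists a : R, Th = [set x | x <= a]) \/
  (exists a b : R, a < b /\ Th = [set x | a <= x <= b]).

Definition infTh (Th : set R) : \bar R := ereal_inf (EFin @` Th).
Definition supTh (Th : set R) : \bar R := ereal_sup (EFin @` Th).

Definition PTheta (Th : set R) : set (probability R R) :=
  [set Q | Q Th = 1%E].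

Definition ocI (a b : \bar R) : set R := [set x | (a < x%:E)%E /\ (x%:E <= b)%E].

Definition bary (Q : probability R R) (a1 a2 : \bar R) : \bar R :=
  if Q (ocI a1 a2) == 0%E then a1
  else (fine (\int[Q]_(x in ocI a1 a2) x%:E) / fine (Q (ocI a1 a2)))%:E.

Fixpoint sba (Th : set R) (Q : probability R R) (j l : nat) : \bar R :=
  match j with
  | 0 => if l == 0%N then infTh Th else supTh Th
  | j'.+1 =>
      if l == 0%N then infTh Th
      else if l == (2 ^ j'.+1)%N then supTh Th
      else if j' == 0%N then (fine (\int[Q]_x x%:E))%:E
      else if odd l then bary Q (sba Th Q j' l./2) (sba Th Q j' l.+1./2)
      else sba Th Q j' l./2
  end.

Definition finite_mean (Q : probability R R) : Prop :=
  (\int[Q]_x (`|x|)%:E < +oo)%E.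

Definition regular_sba (Th : set R) (Q : probability R R) (n : nat) : Prop :=
  forall l1 l2, (1 <= l1 <= 2 ^ n - 1)%N -> (1 <= l2 <= 2 ^ n - 1)%N ->
    sba Th Q n l1 = sba Th Q n l2 -> l1 = l2.

(* arrays: m j l = mu_{j,l} for 1 <= l <= 2^j - 1 (boundary entries are
   inf Th / sup Th and are handled separately) *)
Definition ext_entry (Th : set R) (m : nat -> nat -> R) (j l : nat) : \bar R :=
  if l == 0%N then infTh Th else if l == (2 ^ j)%N then supTh Th
  else (m j l)%:E.

Definition ratio01 (num den : R) : R := if den == 0 then 1 else num / den.

(* Fv m j l = F(mu_{j,l}) *)
Fixpoint Fv (m : nat -> nat -> R) (j l : nat) : R :=
  match j with
  | 0 => if l == 0%N then 0 else 1
  | j'.+1 =>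
      if l == 0%N then 0
      else if l == (2 ^ j'.+1)%N then 1
      else if odd l then
        let k := l.+1./2 in
        Fv m j' (k - 1)%N + (Fv m j' k - Fv m j' (k - 1)%N) *
          ratio01 (m j'.+2 (4 * k - 1)%N - m j'.+2 (4 * k - 2)%N)
                  (m j'.+2 (4 * k - 1)%N - m j'.+2 (4 * k - 3)%N)
      else Fv m j' l./2
  end.

Definition wgt (m : nat -> nat -> R) (n l : nat) : R := Fv m n l - Fv m n (l - 1)%N.

Definition Tn (m : nat -> nat -> R) (n : nat) (A : set R) : \bar R :=
  (\sum_(1 <= l < (2 ^ n).+1) ((wgt m n l)%:E * \d_(m n.+1 (2 * l - 1)%N) A))%E.

Definition is_topology_on (T : Type) (X : set T) (O : set (set T)) : Prop :=
  [/\ O X, O set0, (forall U, O U -> U `<=` X),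
      (forall U V, O U -> O V -> O (U `&` V)) &
      (forall F : set (set T), F `<=` O -> O (\bigcup_(U in F) U))].

Definition weak_subbase (Th : set R) : set (set (probability R R)) :=
  [set U | exists (f : R -> R) (V : set R),
     [/\ (exists M : R, forall x, Th x -> `|f x| <= M),
         {within Th, continuous f}, open V &
         U = [set Q | PTheta Th Q /\ V (fine (\int[Q]_(x in Th) (f x)%:E))]]].

Definition weak_open (Th : set R) (U : set (probability R R)) : Prop :=
  forall O, is_topology_on (PTheta Th) O -> weak_subbase Th `<=` O -> O U.

Definition weak_borel (Th : set R) : set (set (probability R R)) :=
  <<s PTheta Th, weak_open Th >>.

Definition Pp (Th : set R) (p : R) : set (probability R R) :=
  [set Q | PTheta Th Q /\ (\int[Q]_(x in Th) (`|x| `^ p)%:E < +oo)%E].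

Definition couplings (mu nu : probability R R) : set (probability (R * R)%type R) :=
  [set pi | forall A : set R, measurable A ->
     pi (A `*` setT) = mu A /\ pi (setT `*` A) = nu A].

Definition Wp (p : R) (mu nu : probability R R) : R :=
  (fine (ereal_inf [set (\int[pi]_z (`|z.1 - z.2| `^ p)%:E)%E
                   | pi in couplings mu nu])) `^ p^-1.

Definition Wp_open (Th : set R) (p : R) (U : set (probability R R)) : Prop :=
  U `<=` Pp Th p /\
  forall mu, U mu -> exists2 e : R, 0 < e &
    forall nu, Pp Th p nu -> Wp p mu nu < e -> U nu.

Definition Wp_borel (Th : set R) (p : R) : set (set (probability R R)) :=
  <<s Pp Th p, Wp_open Th p >>.

Definition condp (H : probability R R) (B I : set R) : R :=
  fine (H (B `&` I)) / fine (H I).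

(* M : Omega -> array, M w j l = mu_{j,l}(w) for 1 <= j <= n+1, 1 <= l <= 2^j-1,
   is a random array distributed as DSBA(n, H) on the probability space P:
   - the entries are random variables, with mu_{j,2l} = mu_{j-1,l};
   - each new entry mu_{j,2l-1} lies in (mu_{j-1,l-1}, mu_{j-1,l}] (it is sampled
     from a law conditioned to that interval);
   - mu_{1,1} ~ H_{1,1};
   - for j = 2..n+1, given row j-1 (which contains all previous rows), the
     entries mu_{j,2l-1} are independent with laws H_{j,2l-1} conditioned to
     (mu_{j-1,l-1}, mu_{j-1,l}]; this is expressed on the generating
     pi-system of measurable rectangles. *)
Definition is_DSBA (d : measure_display) (Omega : measurableType d)
  (P : probability Omega R) (Th : set R) (n : nat)
  (H : nat -> nat -> probability R R) (M : Omega -> nat -> nat -> R) : Prop :=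
  [/\ (forall j l, (1 <= j <= n.+1)%N -> (1 <= l <= 2 ^ j - 1)%N ->
         measurable_fun setT (fun w => M w j l)),
      (forall w j l, (2 <= j <= n.+1)%N -> (1 <= l <= 2 ^ j.-1 - 1)%N ->
         M w j (2 * l)%N = M w j.-1 l),
      (forall w j k, (1 <= j <= n.+1)%N -> (1 <= k <= 2 ^ j.-1)%N ->
         ocI (ext_entry Th (M w) j.-1 k.-1) (ext_entry Th (M w) j.-1 k)
             (M w j (2 * k - 1)%N)),
      (forall B : set R, measurable B ->
         P [set w | B (M w 1%N 1%N)] = H 1%N 1%N B) &
      (forall j, (2 <= j <= n.+1)%N -> forall A B : nat -> set R,
         (forall l, measurable (A l)) -> (forall k, measurable (B k)) ->
         P [set w | (forall l, (1 <= l <= 2 ^ j.-1 - 1)%N -> A l (M w j.-1 l)) /\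
                    (forall k, (1 <= k <= 2 ^ j.-1)%N -> B k (M w j (2 * k - 1)%N))]
         = (\int[P]_w
              ((\prod_(1 <= l < 2 ^ j.-1) \1_(A l) (M w j.-1 l)) *
               \prod_(1 <= k < (2 ^ j.-1).+1)
                  condp (H j (2 * k - 1)%N) (B k)
                    (ocI (ext_entry Th (M w) j.-1 k.-1) (ext_entry Th (M w) j.-1 k)))%:E)%E)].

End Defs.

From HB Require Import structures.
From mathcomp Require Import all_boot all_order all_algebra.
From mathcomp Require Import all_classical all_reals all_analysis.
From mathcomp Require Import measurable_realfun.
From mathcomp Require Import zify ring lra.
Import Order.TTheory GRing.Theory Num.Theory.
Import numFieldNormedType.Exports.
Set Implicit Arguments. Unset Strict Implicit. Unset Printing Implicit Defensive.
Local Open Scope classical_set_scope.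
Local Open Scope ring_scope.

(* For every outcome w, G w = T_n(M w) is the finite atomic measure
   sum_i w_{n,i} delta_{a_i} with N = 2^n atoms a_i = mu_{n+1,2i-1}.  The
   nesting of the DSBA intervals makes the atoms strictly increasing points
   of Theta; the weights are rational expressions in the entries of the array,
   hence measurable, and, as masses of the distinct atoms of the probability
   G w, they are nonnegative and sum to one.  So w |-> G w factors through the
   measurable map w |-> (a, c) into R^(2N), and it suffices that the preimage
   of every generating open set is open in the coordinates (a, c): such a set
   is a countable union of rational boxes.  For the weak topology this is the
   continuity of (a, c) |-> sum_i c_i f(a_i) for bounded continuous f.  For
   W_p, the coupling that keeps min(c_i, c'_i) on the diagonal and couples the
   remaining masses independently costs at most h (1 + N D) when atoms and
   weights move by less than h <= 1, where D bounds the p-th powers of the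
   distances between atoms. *)

Lemma ler_sum_ord (R : numDomainType) N (F : nat -> R) i :
  (forall j, (j < N)%N -> 0 <= F j) -> (i < N)%N -> F i <= \sum_(j < N) F j.
Proof.
move=> F0 iN; rewrite (bigD1 (Ordinal iN)) //= lerDl.
by apply: sumr_ge0 => j _; exact: F0.
Qed.

Lemma sum_delta (R : numDomainType) N (F : nat -> R) i : (i < N)%N ->
  \sum_(j < N) (i == j)%:R * F j = F i.
Proof.
move=> iN; rewrite (bigD1 (Ordinal iN)) //= eqxx mul1r big1 ?addr0 // => j ji.
rewrite (_ : (i == j) = false) ?mul0r //.
by apply: contraNF ji => /eqP ij; apply/eqP/val_inj.
Qed.

Lemma powR_le_self (R : realType) (x p : R) :
  0 <= x <= 1 -> 1 <= p -> x `^ p <= x.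
Proof.
case/andP; rewrite le0r => /orP[/eqP-> _ p1|x0 x1 p1].
  by rewrite powR0 // gt_eqF // (lt_le_trans ltr01 p1).
by apply: ge1r_powR; rewrite ?x0.
Qed.

Section Theta.
Variables (R : realType) (Th : set R).

Lemma le_infTh a : (forall x, Th x -> a <= x) -> (a%:E <= infTh Th)%E.
Proof. by move=> aTh; apply/ereal_infP => _ [x /aTh ax <-]; rewrite lee_fin. Qed.

Lemma supTh_le b : (forall x, Th x -> x <= b) -> (supTh Th <= b%:E)%E.
Proof. by move=> Thb; apply/ereal_supP => _ [x /Thb xb <-]; rewrite lee_fin. Qed.

Lemma is_Theta_mem x : is_Theta Th ->
  (infTh Th < x%:E)%E -> (x%:E <= supTh Th)%E -> Th x.
Proof.
move=> ThP infx xsup.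
have above a : (forall y, Th y -> a <= y) -> a <= x.
  by move=> /le_infTh/le_lt_trans/(_ infx); rewrite lte_fin => /ltW.
have below b : (forall y, Th y -> y <= b) -> x <= b.
  by move=> /supTh_le/(le_trans xsup); rewrite lee_fin.
move: above below.
case: ThP => [->//|[[a ->]|[[b ->]|[a [b [_ ->]]]]]] /= above below.
- exact: above.
- exact: below.
- apply/andP; split; [apply: above|apply: below] => y /andP[] //.
Qed.

Lemma is_Theta_measurable : is_Theta Th -> measurable Th.
Proof.
case=> [->|[[a ->]|[[b ->]|[a [b [_ ->]]]]]].
- exact: measurableT.
- by apply: closed_measurable; exact: closed_ge.
- by apply: closed_measurable; exact: closed_le.
- rewrite (_ : [set x | a <= x <= b] = [set x | a <= x] `&` [set x | x <= b]).
    by apply: measurableI; apply: closed_measurable;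
      [exact: closed_ge|exact: closed_le].
  by apply/seteqP; split => x /=; [move/andP|move=> [-> ->]].
Qed.

End Theta.

Section SBAArray.
Variable R : realType.
Implicit Types (m : nat -> nat -> R) (n : nat).

Lemma exp2n_eq0 n : (2 ^ n == 0)%N = false.
Proof. by rewrite expn_eq0. Qed.

Definition atom m n i := m n.+1 (2 * i.+1 - 1)%N.

Lemma TnE m n A :
  Tn m n A = (\sum_(i < 2 ^ n) (wgt m n i.+1)%:E * \d_(atom m n i) A)%E.
Proof. by rewrite /Tn big_add1 /= big_mkord. Qed.

Variables (Th : set R) (m : nat -> nat -> R) (n : nat).
Hypothesis atom_in_gap : forall i, (i < 2 ^ n)%N ->
  ocI (ext_entry Th m n i) (ext_entry Th m n i.+1) (atom m n i).

Lemma atom_lt_succ i : (i.+1 < 2 ^ n)%N -> atom m n i < atom m n i.+1.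
Proof.
move=> iSn; have [_] := atom_in_gap (ltnW iSn); have [+ _] := atom_in_gap iSn.
rewrite /ext_entry /= ltn_eqF // => /[swap] /le_lt_trans /[apply].
by rewrite lte_fin.
Qed.

Lemma atom_lt : {in [pred i | (i < 2 ^ n)%N] &,
  {homo atom m n : i j / (i < j)%N >-> i < j}}.
Proof.
apply: (@homo_ltn_in _ _ _ (fun x y : R => x < y)) => [y x z|i j|i _].
- exact: lt_trans.
- by rewrite !inE => _ jn k /andP[_ kj]; exact: ltn_trans kj jn.
- by rewrite inE; exact: atom_lt_succ.
Qed.

Lemma atom_inj : {in [pred i | (i < 2 ^ n)%N] &, injective (atom m n)}.
Proof.
move=> i j ilt jlt eij.
case: (ltngtP i j) => // [ij|ji].
  by have := atom_lt ilt jlt ij; rewrite eij ltxx.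
by have := atom_lt jlt ilt ji; rewrite eij ltxx.
Qed.

Lemma atom_Th i : is_Theta Th -> (i < 2 ^ n)%N -> Th (atom m n i).
Proof.
move=> ThP ilt; have n0 : (0 < 2 ^ n)%N by rewrite expn_gt0.
have atom_le j k : (j <= k < 2 ^ n)%N -> atom m n j <= atom m n k.
  case/andP; rewrite leq_eqVlt => /orP[/eqP -> //|jk kn].
  by apply/ltW/atom_lt; rewrite // inE (ltn_trans jk).
apply: is_Theta_mem ThP _ _.
  have [+ _] := atom_in_gap n0; rewrite /ext_entry /= => /lt_le_trans; apply.
  by rewrite lee_fin atom_le.
have last_lt : ((2 ^ n).-1 < 2 ^ n)%N by rewrite prednK.
have [_] := atom_in_gap last_lt; rewrite /ext_entry prednK // exp2n_eq0 eqxx.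
move=> le_last; apply: le_trans le_last.
by rewrite lee_fin; apply: atom_le; rewrite last_lt andbT -ltnS prednK.
Qed.

End SBAArray.

Lemma measurable_inv (R : realType) : measurable_fun [set: R] (@GRing.inv R).
Proof.
have mC : measurable (~` [set (0:R)]) := measurableC (measurable_set1 0).
rewrite -(setUv [set 0]); apply/(measurable_funU _ (measurable_set1 0) mC).
split; first exact: measurable_fun_set1.
apply: open_continuous_measurable_fun; first exact/closed_openC/closed_eq.
by move=> x; rewrite inE => /eqP x0; exact: inv_continuous.
Qed.

Section MeasurableFv.
Context d (Omega : measurableType d) (R : realType).

Lemma measurable_ratio01 (f g : Omega -> R) : measurable_fun setT f ->
  measurable_fun setT g -> measurable_fun setT (fun w => ratio01 (f w) (g w)).
Proof.
move=> mf mg; apply: measurable_fun_ifT.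
- by apply: measurable_fun_eqr => //; exact: measurable_cst.
- exact: measurable_cst.
- exact: measurable_funM mf (measurableT_comp (@measurable_inv R) mg).
Qed.

Variables (M : Omega -> nat -> nat -> R) (n : nat).
Hypothesis mM : forall j l, (1 <= j <= n.+1)%N -> (1 <= l <= 2 ^ j - 1)%N ->
  measurable_fun setT (fun w => M w j l).

Lemma measurable_Fv j l : (j <= n)%N -> (l <= 2 ^ j)%N ->
  measurable_fun setT (fun w => Fv (M w) j l).
Proof.
elim: j l => [|j IH] l jn ll /=; first by case: (l == 0)%N; exact: measurable_cst.
case: eqP => l0; first exact: measurable_cst.
case: eqP => lj; first exact: measurable_cst.
have e2 : (2 ^ j.+1 = 2 * 2 ^ j)%N by rewrite expnS.
have e4 : (2 ^ j.+2 = 4 * 2 ^ j)%N by rewrite !expnS mulnA.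
case lodd: (odd l); last first.
  by apply: IH; [exact: ltnW|have := half_leq ll; rewrite e2 mul2n doubleK].
set k := l.+1./2.
have lk : (l.+1 = 2 * k)%N by rewrite /k -[LHS]odd_double_half /= lodd -mul2n.
have l2j : (l < 2 ^ j.+1)%N by rewrite ltn_neqAle ll andbT; apply/eqP.
have mMk r : (1 <= r <= 3)%N ->
    measurable_fun setT (fun w => M w j.+2 (4 * k - r)%N).
  by move=> r13; apply: mM; [lia|rewrite e4; lia].
apply: measurable_funD; first by apply: IH; lia.
apply: measurable_funM; first by apply: measurable_funB; apply: IH; lia.
by apply: measurable_ratio01; apply: measurable_funB; apply: mMk.
Qed.

End MeasurableFv.

Section DiracSum.
Context d (T : measurableType d) (R : realType).

Lemma max0_ge0 (r : R) : 0 <= Num.max r 0.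
Proof. by rewrite le_max lexx orbT. Qed.

Definition max0_nng (r : R) : {nonneg R} := NngNum (max0_ge0 r).

Lemma max0_id (r : R) : 0 <= r -> Num.max r 0 = r.
Proof. by move=> r0; apply/max_idPl. Qed.

Lemma max0B (r : R) : Num.max r 0 - Num.max (- r) 0 = r.
Proof.
by rewrite !maxEle; case: (leP r 0) => ?; case: (leP (- r) 0) => ?; lra.
Qed.

(* Negative weights are truncated to 0, so that every [c] gives a measure. *)
Definition dirac_sum (a : nat -> T) (c : nat -> R) (N : nat) :
    {measure set T -> \bar R} :=
  msum (fun i => mscale (max0_nng (c i)) (\d_(a i))) N.

Variables (a : nat -> T) (c : nat -> R) (N : nat).

Lemma dirac_sumE A :
  dirac_sum a c N A = (\sum_(i < N) (Num.max (c i) 0)%:E * \d_(a i) A)%E.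
Proof. by []. Qed.

Lemma ge0_integral_dirac_sum D (f : T -> \bar R) : measurable D ->
  measurable_fun D f -> (forall x, D x -> 0 <= f x)%E ->
  (\int[dirac_sum a c N]_(x in D) f x =
   \sum_(i < N) (Num.max (c i) 0)%:E * (\d_(a i) D * f (a i)))%E.
Proof.
move=> mD mf f0; rewrite ge0_integral_measure_sum //; apply: eq_bigr => i _.
by rewrite ge0_integral_mscale // integral_dirac.
Qed.

Lemma integral_dirac_sum D (g : T -> R) : measurable D -> measurable_fun D g ->
  (\int[dirac_sum a c N]_(x in D) (g x)%:E =
   (\sum_(i < N) Num.max (c i) 0 * ((a i \in D)%:R * g (a i)))%:E)%E.
Proof.
move=> mD mg; have mEg : measurable_fun D (EFin \o g) by exact/measurable_EFinP.
rewrite integralE !ge0_integral_dirac_sum //;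
  try exact: (measurable_funeneg mEg); try exact: (measurable_funepos mEg).
under eq_bigr do rewrite diracE funeposE -EFin_max -!EFinM.
under [X in (_ - X)%E]eq_bigr do rewrite diracE funenegE -EFin_max -!EFinM.
rewrite !sumEFin -EFinB -sumrB; congr EFin; apply: eq_bigr => i _.
by rewrite -!mulrBr max0B.
Qed.

End DiracSum.

Definition is_atomic d (T : measurableType d) (R : realType)
    (mu : set T -> \bar R) (a : nat -> T) (c : nat -> R) (N : nat) :=
  forall A, measurable A -> mu A = (\sum_(i < N) (c i)%:E * \d_(a i) A)%E.

Lemma is_atomicE d (T : measurableType d) (R : realType) (mu : set T -> \bar R)
    a (c : nat -> R) N A :
  is_atomic mu a c N -> measurable A ->
  mu A = (\sum_(i < N) c i * (a i \in A)%:R)%:E.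
Proof.
move=> mu_atomic mA; rewrite mu_atomic // -sumEFin; apply: eq_bigr => i _.
by rewrite diracE -EFinM.
Qed.

Section AtomicMeasure.
Variables (R : realType) (mu : {measure set R -> \bar R}).
Variables (a c : nat -> R) (N : nat).
Hypothesis mu_atomic : is_atomic mu a c N.
Hypothesis a_inj : {in [pred i | (i < N)%N] &, injective a}.

Lemma atomic_set1 i : (i < N)%N -> mu [set a i] = (c i)%:E.
Proof.
move=> iN; rewrite (is_atomicE mu_atomic) ?measurable_set1 //.
rewrite (bigD1 (Ordinal iN)) //= big1 ?addr0 ?mem_set ?mulr1 // => j ji.
rewrite memNset ?mulr0 // => /= eji.
by move/eqP: ji; apply; apply/val_inj/(a_inj (ltn_ord j) iN).
Qed.

Lemma atomic_weight_ge0 i : (i < N)%N -> 0 <= c i.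
Proof. by move=> iN; rewrite -lee_fin -atomic_set1. Qed.

Lemma atomic_integral D (g : R -> R) : measurable D -> measurable_fun D g ->
  (\int[mu]_(x in D) (g x)%:E =
   (\sum_(i < N) c i * ((a i \in D)%:R * g (a i)))%:E)%E.
Proof.
move=> mD mg; rewrite (eq_measure_integral (dirac_sum a c N)) => [|A mA _].
  rewrite integral_dirac_sum //; congr EFin; apply: eq_bigr => i _.
  by rewrite max0_id // atomic_weight_ge0.
rewrite mu_atomic // dirac_sumE; apply: eq_bigr => i _.
by rewrite max0_id // atomic_weight_ge0.
Qed.

Lemma atomic_weight_le1 i : mu setT = 1%E -> (i < N)%N -> c i <= 1.
Proof.
move=> mu1 iN; have <- : \sum_(j < N) c j = 1.
  apply/EFin_inj; rewrite -mu1 (is_atomicE mu_atomic) //.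
  by congr EFin; apply: eq_bigr => j _; rewrite in_setT mulr1.
exact: (ler_sum_ord (F := c) atomic_weight_ge0).
Qed.

End AtomicMeasure.

Section CoordinateTopology.
Variables (Omega : Type) (R : realType) (g : nat -> Omega -> R) (N : nat).

Definition coord_open (S : set Omega) := forall w, S w -> exists2 e : R, 0 < e &
  forall w', (forall i, (i < N)%N -> `|g i w' - g i w| < e) -> S w'.

Lemma coord_open_topology (P : Type) (G : Omega -> P) (X : set P) :
  (forall w, X (G w)) ->
  is_topology_on X [set U | U `<=` X /\ coord_open (G @^-1` U)].
Proof.
move=> GX; split.
- by split => // w _; exists 1 => // w' _; exact: GX.
- by split => // w [].
- by move=> U [].
- move=> U V [UX oU] [_ oV]; split=> [x [/UX]//|w [Uw Vw]].
  have [e1 e10 h1] := oU w Uw; have [e2 e20 h2] := oV w Vw.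
  exists (Num.min e1 e2); first by rewrite lt_min e10 e20.
  move=> w' near_w; split; [apply: h1|apply: h2] => i iN;
    by apply: lt_le_trans (near_w i iN) _; rewrite ge_min lexx ?orbT.
- move=> F FO; split=> [x [U FU Ux]|w [U FU Uw]]; first exact: (FO U FU).1.
  have [e e0 he] := (FO U FU).2 w Uw.
  by exists e => // w' near_w; exists U => //; exact: he.
Qed.

End CoordinateTopology.

Section CoordinateOpenMeasurable.
Context d (Omega : measurableType d) (R : realType).
Variables (g : nat -> Omega -> R) (N : nat).
Hypothesis mg : forall i, (i < N)%N -> measurable_fun setT (g i).

Definition rat_box (q : seq rat) (r : rat) : set Omega :=
  [set w | forall i, (i < N)%N -> `|g i w - ratr (nth 0 q i)| < ratr r].

Lemma measurable_rat_box q r : measurable (rat_box q r).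
Proof.
rewrite (_ : rat_box q r = \bigcap_i (if (i < N)%N then
    g i @^-1` `](ratr (nth 0 q i) - ratr r), (ratr (nth 0 q i) + ratr r)[
    else setT)).
  apply: bigcapT_measurable => i; case: ifP => iN; last exact: measurableT.
  by rewrite -[X in measurable X]setTI; apply: mg => //; exact: measurable_itv.
apply/seteqP; split=> [w /= box_w i _|w /= box_w i iN].
  by case: ifP => // iN; rewrite /= in_itv /= -ltr_distlC distrC box_w.
by have := box_w i I; rewrite iN /= in_itv /= -ltr_distlC distrC.
Qed.

Lemma rat_box_within w (e : R) : 0 < e -> exists q r, rat_box q r w /\
  rat_box q r `<=` [set w' | forall i, (i < N)%N -> `|g i w' - g i w| < e].
Proof.
move=> e0; have [r] := @rat_in_itvoo R 0 (e / 2) ltac:(by rewrite divr_gt0).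
rewrite in_itv /= => /andP[r0 re].
have /choice[q gq] : forall i, exists q : rat,
    ratr q \in `](g i w - ratr r), (g i w + ratr r)[.
  by move=> i; apply: rat_in_itvoo; rewrite ltrBlDr -addrA ltrDl addr_gt0.
have box_w : rat_box (mkseq q N) r w.
  by move=> i iN; rewrite nth_mkseq // ltr_distlC; have := gq i; rewrite in_itv.
exists (mkseq q N), r; split => // w' box_w' i iN.
have := box_w' i iN; have := box_w i iN; rewrite nth_mkseq // distrC => h1 h2.
rewrite -(subrKA (ratr (q i)) (g i w') (- g i w)).
apply: le_lt_trans (ler_normD _ _) _.
by rewrite (splitr e) ltrD // (lt_trans _ re).
Qed.

Lemma coord_open_measurable S : coord_open g N S -> measurable S.
Proof.
move=> oS; pose B (k : seq rat * rat) : set Omega :=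
  if pselect (rat_box k.1 k.2 `<=` S) is left _ then rat_box k.1 k.2 else set0.
have -> : S = \bigcup_k B k.
  apply/seteqP; split=> [w Sw|w [k _]].
    have [e e0 he] := oS w Sw.
    have [q [r [box_w box_sub]]] := rat_box_within w e0.
    by exists (q, r) => //; rewrite /B /=; case: pselect => // -[] w' /box_sub /he.
  by rewrite /B; case: pselect => // h /h.
apply: countable_bigcupT_measurable; first exact: countableP.
by move=> k; rewrite /B; case: pselect => _ //; exact: measurable_rat_box.
Qed.

End CoordinateOpenMeasurable.

Lemma g_sigma_preimage_measurable d (Omega : measurableType d) (P : Type)
    (G : Omega -> P) (X : set P) (O : set (set P)) :
  (forall w, X (G w)) -> (forall U, O U -> measurable (G @^-1` U)) ->
  forall B, <<s X, O>> B -> measurable (G @^-1` B).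
Proof.
move=> GX mO; apply: smallest_sub => //; split => /=.
- by rewrite preimage_set0.
- move=> A mA; rewrite (_ : G @^-1` (X `\` A) = ~` (G @^-1` A)).
    exact: measurableC.
  by apply/seteqP; split => w /=; [case|move=> nA; split; [exact: GX|]].
- by move=> A mA; rewrite preimage_bigcup; exact: bigcupT_measurable.
Qed.

Lemma within_continuous_dist (R : realType) (Th : set R) (f : R -> R) x :
  {within Th, continuous f} -> Th x -> forall e : R, 0 < e ->
  exists2 h : R, 0 < h & forall y, Th y -> `|y - x| < h -> `|f y - f x| < e.
Proof.
move=> /subspace_continuousP cf Thx e e0.
have /cvgrPdist_lt/(_ e e0)/nbhs_ballP[h h0 hball] := cf x Thx.
exists h => // y Thy yx; rewrite distrC; apply: hball => //.
by rewrite /ball /= distrC.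
Qed.

Lemma fin_common_pos (R : realType) (P : nat -> R -> Prop) N :
  (forall i e e', 0 < e' -> e' <= e -> P i e -> P i e') ->
  (forall i, (i < N)%N -> exists2 e : R, 0 < e & P i e) ->
  exists2 e : R, 0 < e & forall i, (i < N)%N -> P i e.
Proof.
move=> P_le; elim: N => [|N IH] PN; first by exists 1.
have [e1 e10 P1] := IH (fun i iN => PN i (ltnW iN)).
have [e2 e20 P2] := PN N (ltnSn N).
have e0 : 0 < Num.min e1 e2 by rewrite lt_min e10 e20.
exists (Num.min e1 e2) => // i; rewrite ltnS leq_eqVlt => /orP[/eqP->|iN].
  by apply: P_le P2; rewrite // ge_min lexx orbT.
by apply: P_le (P1 i iN); rewrite // ge_min lexx.
Qed.

Section WeightedSumContinuity.
Variables (R : realType) (Th : set R) (f : R -> R) (B : R) (N : nat).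
Hypotheses (f_bounded : forall x, Th x -> `|f x| <= B)
  (f_cont : {within Th, continuous f}).
Variables (a c : nat -> R).
Hypothesis a_Th : forall i, (i < N)%N -> Th (a i).

Lemma weighted_sum_near (e : R) : 0 < e -> exists2 h : R, 0 < h &
  forall a' c' : nat -> R,
    (forall i, (i < N)%N -> Th (a' i)) ->
    (forall i, (i < N)%N -> `|c' i| <= 1) ->
    (forall i, (i < N)%N -> `|a' i - a i| < h /\ `|c' i - c i| < h) ->
    `|\sum_(i < N) c' i * f (a' i) - \sum_(i < N) c i * f (a i)| < e.
Proof.
move=> e0; pose e1 := e / (2 * N.+1%:R).
have e10 : 0 < e1 by rewrite divr_gt0 // mulr_gt0.
have B1 : 0 < `|B| + 1 by have := normr_ge0 B; lra.
have fB x : Th x -> `|f x| <= `|B| + 1.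
  by move=> /f_bounded fxB; have := ler_norm B; lra.
have [h h0 f_near] := @fin_common_pos R (fun i h => forall y, Th y ->
    `|y - a i| < h -> `|f y - f (a i)| < e1) N
  (fun i h h' _ h'h Ph y Thy yh => Ph y Thy (lt_le_trans yh h'h))
  (fun i iN => within_continuous_dist f_cont (a_Th iN) e10).
exists (Num.min h (e1 / (`|B| + 1))); first by rewrite lt_min h0 divr_gt0.
move=> a' c' a'Th c'1 near.
have term i : (i < N)%N -> `|c' i * f (a' i) - c i * f (a i)| <= e1 + e1.
  move=> iN; have [near_a near_c] := near i iN.
  rewrite -(subrKA (c' i * f (a i))) -mulrBr -mulrBl.
  apply: le_trans (ler_normD _ _) _; rewrite !normrM; apply: lerD.
    rewrite -[e1]mul1r; apply: ler_pM => //; first exact: c'1.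
    apply/ltW/f_near => //; first exact: a'Th.
    by apply: lt_le_trans near_a _; rewrite ge_min lexx.
  rewrite -[e1](divfK (lt0r_neq0 B1)); apply: ler_pM => //; last exact/fB/a_Th.
  by apply/ltW/(lt_le_trans near_c); rewrite ge_min lexx orbT.
rewrite -sumrB; apply: le_lt_trans (ler_norm_sum _ _ _) _.
apply: (@le_lt_trans _ _ (\sum_(i < N) (e1 + e1))).
  by apply: ler_sum => i _; exact: term.
have -> : \sum_(i < N) (e1 + e1) = e * (N%:R / N.+1%:R).
  by rewrite sumr_const card_ord /e1 -mulr2n -mulrnA -mulr_natr; field.
by rewrite gtr_pMr // ltr_pdivrMr // mul1r ltr_nat.
Qed.

End WeightedSumContinuity.

Section OverlapCoupling.
Variables (R : realType) (N : nat) (c c' : nat -> R).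
Hypotheses (c_ge0 : forall i, (i < N)%N -> 0 <= c i)
  (c'_ge0 : forall i, (i < N)%N -> 0 <= c' i)
  (c_sum1 : \sum_(i < N) c i = 1) (c'_sum1 : \sum_(i < N) c' i = 1).

Definition overlap i := Num.min (c i) (c' i).
Definition excess := \sum_(i < N) (c i - overlap i).

(* The common mass stays on the diagonal and the two excesses are coupled
   independently; if [excess = 0] the second term is [0] since [x / 0 = 0]. *)
Definition cplw i j :=
  (i == j)%:R * overlap i + (c i - overlap i) * (c' j - overlap j) / excess.

Lemma overlap_le_l i : overlap i <= c i.
Proof. by rewrite ge_min lexx. Qed.

Lemma overlap_le_r i : overlap i <= c' i.
Proof. by rewrite ge_min lexx orbT. Qed.

Lemma overlap_ge0 i : (i < N)%N -> 0 <= overlap i.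
Proof. by move=> iN; rewrite le_min c_ge0 ?c'_ge0. Qed.

Lemma excess_r : \sum_(j < N) (c' j - overlap j) = excess.
Proof. by rewrite /excess !sumrB c_sum1 c'_sum1. Qed.

Lemma excess_ge0 : 0 <= excess.
Proof. by apply: sumr_ge0 => i _; rewrite subr_ge0 overlap_le_l. Qed.

Lemma excess_eq0 : excess = 0 -> forall i, (i < N)%N ->
  c i = overlap i /\ c' i = overlap i.
Proof.
move=> ex0 i iN; split; apply/eqP; rewrite -subr_eq0; apply/eqP.
  apply: (@psumr_eq0P _ _ _ (fun j : 'I_N => c j - overlap j) _ ex0 (Ordinal iN)).
    by move=> j _; rewrite subr_ge0 overlap_le_l.
  by [].
have ex0' := etrans excess_r ex0.
apply: (@psumr_eq0P _ _ _ (fun j : 'I_N => c' j - overlap j) _ ex0' (Ordinal iN)).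
  by move=> j _; rewrite subr_ge0 overlap_le_r.
by [].
Qed.

Lemma excess_le (h : R) : (forall i, (i < N)%N -> `|c' i - c i| < h) ->
  excess <= N%:R * h.
Proof.
move=> cc'; apply: (@le_trans _ _ (\sum_(i < N) h)); last first.
  by rewrite sumr_const card_ord mulr_natl.
apply: ler_sum => i _; have := cc' i (ltn_ord i).
rewrite /overlap minEle; case: (leP (c i) (c' i)) => _ near_i.
  by rewrite subrr ltW // (le_lt_trans _ near_i).
by rewrite ltW // (le_lt_trans _ near_i) // distrC ler_norm.
Qed.

Lemma cplw_ge0 i j : (i < N)%N -> (j < N)%N -> 0 <= cplw i j.
Proof.
move=> iN jN; apply: addr_ge0; first by rewrite mulr_ge0 ?ler0n ?overlap_ge0.
by rewrite divr_ge0 ?excess_ge0 // mulr_ge0 // subr_ge0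
  ?overlap_le_l ?overlap_le_r.
Qed.

Lemma cplw_sum_row i : (i < N)%N -> \sum_(j < N) cplw i j = c i.
Proof.
move=> iN; rewrite big_split /= (@sum_delta _ N (fun=> overlap i)) //.
rewrite -mulr_suml -mulr_sumr excess_r.
have [ex0|ex0] := eqVneq excess 0; last by rewrite mulfK // addrC subrK.
by rewrite ex0 mulr0 mul0r addr0; have [] := excess_eq0 ex0 iN.
Qed.

Lemma cplw_sum_col j : (j < N)%N -> \sum_(i < N) cplw i j = c' j.
Proof.
move=> jN; rewrite big_split /=.
rewrite (eq_bigr (fun i : 'I_N => (j == i)%:R * overlap i)) => [|i _]; last first.
  by rewrite eq_sym.
rewrite (@sum_delta _ N) // -!mulr_suml -/excess.
have [ex0|ex0] := eqVneq excess 0.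
  by rewrite ex0 mul0r mul0r addr0; have [] := excess_eq0 ex0 jN.
by rewrite mulrAC divff // mul1r addrC subrK.
Qed.

Lemma residual_mass_le : \sum_(i < N) \sum_(j < N)
  (c i - overlap i) * (c' j - overlap j) / excess <= excess.
Proof.
under eq_bigr do rewrite -mulr_suml -mulr_sumr excess_r.
rewrite -!mulr_suml -/excess.
by have [->|ex0] := eqVneq excess 0; rewrite ?mulr0 ?mul0r // mulfK.
Qed.

Lemma cplw_cost_le (a a' : nat -> R) (p h D : R) :
  1 <= p -> h <= 1 -> 0 <= D ->
  (forall i, (i < N)%N -> `|a' i - a i| < h) ->
  (forall i j, (i < N)%N -> (j < N)%N -> `|a i - a' j| `^ p <= D) ->
  \sum_(i < N) \sum_(j < N) cplw i j * `|a i - a' j| `^ p <= h + excess * D.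
Proof.
move=> p1 h1 D0 aa' costD; pose X i j := `|a i - a' j| `^ p.
have diag i : (i < N)%N ->
    \sum_(j < N) (i == j)%:R * overlap i * X i j = overlap i * X i i.
  by move=> iN; rewrite -(@sum_delta _ N (fun j => overlap i * X i j)) //;
    apply: eq_bigr => j _; rewrite mulrA.
under eq_bigr do under eq_bigr do rewrite mulrDl.
under eq_bigr do rewrite big_split /=.
rewrite big_split /=; apply: lerD.
  under eq_bigr => i _ do rewrite diag //.
  rewrite -[h]mul1r -c_sum1 mulr_suml; apply: ler_sum => i _.
  have near_i : `|a i - a' i| < h by rewrite distrC aa'.
  apply: ler_pM; rewrite ?overlap_ge0 ?powR_ge0 ?overlap_le_l //.
  apply: le_trans (ltW near_i); apply: powR_le_self => //.
  by rewrite normr_ge0 (le_trans (ltW near_i)).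
apply: (@le_trans _ _ (\sum_(i < N) \sum_(j < N)
    ((c i - overlap i) * (c' j - overlap j) / excess * D))).
  apply: ler_sum => i _; apply: ler_sum => j _; apply: ler_pM => //.
    by rewrite divr_ge0 ?excess_ge0 // mulr_ge0 // subr_ge0
      ?overlap_le_l ?overlap_le_r.
  exact: costD.
under eq_bigr do rewrite -mulr_suml.
by rewrite -mulr_suml ler_wpM2r // residual_mass_le.
Qed.

End OverlapCoupling.

Section OverlapCouplingMeasure.
Variables (R : realType) (N : nat) (a c a' c' : nat -> R).
Hypotheses (c_ge0 : forall i, (i < N)%N -> 0 <= c i)
  (c'_ge0 : forall i, (i < N)%N -> 0 <= c' i)
  (c_sum1 : \sum_(i < N) c i = 1) (c'_sum1 : \sum_(i < N) c' i = 1).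

Let w := cplw N c c'.

Definition coupling_measure : {measure set (R * R)%type -> \bar R} :=
  msum (fun i => dirac_sum (fun j => (a i, a' j)) (w i) N) N.

Lemma coupling_measureE S : coupling_measure S =
  (\sum_(i < N) \sum_(j < N) w i j * ((a i, a' j) \in S)%:R)%:E.
Proof.
rewrite -sumEFin; apply: eq_bigr => i _; rewrite dirac_sumE -sumEFin.
apply: eq_bigr => j _; rewrite diracE -EFinM max0_id //.
exact: cplw_ge0.
Qed.

Lemma coupling_measure_setT : coupling_measure setT = 1%E.
Proof.
rewrite coupling_measureE; congr EFin.
under eq_bigr do under eq_bigr do rewrite in_setT mulr1.
by rewrite -c_sum1; apply: eq_bigr => i _; rewrite cplw_sum_row.
Qed.

(* The fallback of [mnormalize] is irrelevant: the total mass is 1. *)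
Definition overlap_coupling : probability (R * R)%type R :=
  mnormalize coupling_measure (\d_(a 0%N, a' 0%N)).

Lemma overlap_couplingE S : overlap_coupling S = coupling_measure S.
Proof.
rewrite /overlap_coupling /= /mnormalize coupling_measure_setT /=.
by case: ifPn => [/orP[]|_]; rewrite ?eqe ?oner_eq0 //= invr1 mule1.
Qed.

Lemma overlap_coupling_couplings (mu nu : probability R R) :
  is_atomic mu a c N -> is_atomic nu a' c' N -> couplings mu nu overlap_coupling.
Proof.
move=> mu_atomic nu_atomic A mA; rewrite !overlap_couplingE !coupling_measureE.
rewrite (is_atomicE mu_atomic mA) (is_atomicE nu_atomic mA).
split; congr EFin; last rewrite exchange_big /=; apply: eq_bigr => i _.
  under eq_bigr do rewrite in_setX in_setT andbT /=.
  by rewrite -mulr_suml cplw_sum_row.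
under eq_bigr do rewrite in_setX in_setT /=.
by rewrite -mulr_suml cplw_sum_col.
Qed.

Lemma overlap_coupling_cost (p : R) :
  (\int[overlap_coupling]_z (`|z.1 - z.2| `^ p)%:E =
   (\sum_(i < N) \sum_(j < N) w i j * `|a i - a' j| `^ p)%:E)%E.
Proof.
have mcost : measurable_fun setT (fun z : R * R => `|z.1 - z.2| `^ p).
  apply: measurableT_comp (measurable_powR p) _.
  apply: measurableT_comp (@normr_measurable R setT) _.
  exact: measurable_funB measurable_fst measurable_snd.
rewrite (eq_measure_integral coupling_measure) => [|S _ _]; last first.
  exact: overlap_couplingE.
have cost_ge0 (z : R * R) : setT z -> (0 <= (`|z.1 - z.2| `^ p)%:E)%E.
  by rewrite lee_fin powR_ge0.
rewrite ge0_integral_measure_sum //; last exact/measurable_EFinP.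
rewrite -sumEFin; apply: eq_bigr => i _.
rewrite integral_dirac_sum //; congr EFin; apply: eq_bigr => j _.
by rewrite max0_id ?cplw_ge0 // in_setT mul1r.
Qed.

End OverlapCouplingMeasure.

Lemma Wp_lt_coupling (R : realType) (p e C : R) (mu nu : probability R R)
    (pi : probability (R * R)%type R) :
  0 < p -> 0 < e -> couplings mu nu pi ->
  (\int[pi]_z (`|z.1 - z.2| `^ p)%:E = C%:E)%E -> C < e `^ p -> Wp p mu nu < e.
Proof.
move=> p0 e0 pi_cpl piC Ce; rewrite /Wp.
set S := [set _ | _ in _].
have infC : (ereal_inf S <= C%:E)%E by apply: ereal_inf_lbound; exists pi.
have inf0 : (0 <= ereal_inf S)%E.
  apply/ereal_infP => _ [pi' _ <-].
  by apply: integral_ge0 => z _; rewrite lee_fin powR_ge0.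
have infC' : fine (ereal_inf S) <= C.
  by rewrite -lee_fin fineK // ge0_fin_numE // (le_lt_trans infC) ?ltey.
have inf0' : 0 <= fine (ereal_inf S) by rewrite fine_ge0.
have C0 : 0 <= C := le_trans inf0' infC'.
apply: (@le_lt_trans _ _ (C `^ p^-1)).
  by apply: ge0_ler_powR => //; rewrite ?nnegrE // invr_ge0 ltW.
have pinv0 : 0 < p^-1 by rewrite invr_gt0.
have := @gt0_ltr_powR _ _ pinv0 C (e `^ p); rewrite !nnegrE powR_ge0.
by move=> /(_ C0 isT Ce); rewrite -powRrM mulfV ?gt_eqF // powRr1 ?ltW.
Qed.

Section WassersteinNear.
Variables (R : realType) (p : R) (N : nat).
Variables (mu : probability R R) (a c : nat -> R).
Hypotheses (p1 : 1 <= p) (mu_atomic : is_atomic mu a c N)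
  (c_ge0 : forall i, (i < N)%N -> 0 <= c i) (c_sum1 : \sum_(i < N) c i = 1).

Lemma Wp_atomic_near (e : R) : 0 < e -> exists2 h : R, 0 < h &
  forall (nu : probability R R) (a' c' : nat -> R), is_atomic nu a' c' N ->
    (forall i, (i < N)%N -> 0 <= c' i) -> \sum_(i < N) c' i = 1 ->
    (forall i, (i < N)%N -> `|a' i - a i| < h /\ `|c' i - c i| < h) ->
    Wp p mu nu < e.
Proof.
move=> e0; have p0 : 0 < p := lt_le_trans ltr01 p1.
pose A : R := \sum_(i < N) `|a i|.
have A0 : 0 <= A by apply: sumr_ge0.
pose D := (A + A + 1) `^ p.
have D0 : 0 <= D := powR_ge0 _ _.
have ND0 : 0 < 1 + N%:R * D by rewrite (lt_le_trans ltr01) // lerDl mulr_ge0.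
pose h := Num.min 1 (e `^ p / (2 * (1 + N%:R * D))).
have h0 : 0 < h by rewrite lt_min ltr01 divr_gt0 ?mulr_gt0 ?powR_gt0.
have h1 : h <= 1 by rewrite ge_min lexx.
have h_le : h <= e `^ p / (2 * (1 + N%:R * D)) by rewrite ge_min lexx orbT.
have he : h * (1 + N%:R * D) < e `^ p.
  rewrite -ltr_pdivlMr //; apply: le_lt_trans h_le _.
  by rewrite invfM mulrCA gtr_pMl ?divr_gt0 ?powR_gt0 // invf_lt1 // ltr1n.
exists h => // nu a' c' nu_atomic c'_ge0 c'_sum1 near.
have dist_le i j : (i < N)%N -> (j < N)%N -> `|a i - a' j| `^ p <= D.
  move=> iN jN; apply: ge0_ler_powR; rewrite ?nnegrE //; [exact: ltW|lra|].
  have [near_j _] := near j jN.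
  have a_le k : (k < N)%N -> `|a k| <= A.
    by apply: (ler_sum_ord (F := fun l => `|a l|)) => l _; exact: normr_ge0.
  have := a_le i iN; have := a_le j jN.
  have := ler_normB (a i) (a' j); have := ler_normD (a' j - a j) (a j).
  rewrite subrK; lra.
have cpl := overlap_coupling_couplings c_ge0 c'_ge0 c_sum1 c'_sum1
  mu_atomic nu_atomic.
have cost := overlap_coupling_cost a a' c_ge0 c'_ge0 c_sum1 c'_sum1 p.
apply: (Wp_lt_coupling p0 e0 cpl cost).
apply: le_lt_trans he; rewrite mulrDr mulr1 mulrCA mulrA.
apply: le_trans (cplw_cost_le c_ge0 c'_ge0 c_sum1 c'_sum1 p1 h1 D0 _ dist_le) _.
  by move=> i iN; have [] := near i iN.
by rewrite lerD2l ler_wpM2r // excess_le // => i iN; have [] := near i iN.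
Qed.

End WassersteinNear.

Section RandomAtomicMeasure.
Context d (Omega : measurableType d) (R : realType).
Variables (Th : set R) (G : Omega -> probability R R) (N : nat).
Variables (a c : Omega -> nat -> R).
Hypotheses (ThP : is_Theta Th)
  (ma : forall i, (i < N)%N -> measurable_fun setT (a ^~ i))
  (mc : forall i, (i < N)%N -> measurable_fun setT (c ^~ i))
  (a_Th : forall w i, (i < N)%N -> Th (a w i))
  (a_inj : forall w, {in [pred i | (i < N)%N] &, injective (a w)})
  (G_atomic : forall w, is_atomic (G w) (a w) (c w) N).

Let c_ge0 w i : (i < N)%N -> 0 <= c w i.
Proof. exact: (atomic_weight_ge0 (G_atomic w) (@a_inj w)). Qed.

Let c_sum1 w : \sum_(i < N) c w i = 1.
Proof.
apply/EFin_inj; rewrite -(probability_setT (G w)) (is_atomicE (G_atomic w)) //.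
by congr EFin; apply: eq_bigr => i _; rewrite in_setT mulr1.
Qed.

Let integral_G w (f : R -> R) : measurable_fun Th f ->
  fine (\int[G w]_(x in Th) (f x)%:E)%E = \sum_(i < N) c w i * f (a w i).
Proof.
move=> mf; have mTh := is_Theta_measurable ThP.
rewrite (atomic_integral (G_atomic w) (@a_inj w) mTh mf) /=.
by apply: eq_bigr => i _; rewrite mem_set ?mul1r //; exact: a_Th.
Qed.

Lemma atomic_PTheta w : PTheta Th (G w).
Proof.
rewrite /PTheta /= (is_atomicE (G_atomic w) (is_Theta_measurable ThP)).
have -> : \sum_(i < N) c w i * (a w i \in Th)%:R = \sum_(i < N) c w i.
  by apply: eq_bigr => i _; rewrite mem_set ?mulr1 //; exact: a_Th.
by rewrite c_sum1.
Qed.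

Lemma atomic_Pp p w : Pp Th p (G w).
Proof.
split; first exact: atomic_PTheta.
have mpow : measurable_fun Th (fun x : R => `|x| `^ p).
  apply: measurable_funTS; apply: measurableT_comp (measurable_powR p) _.
  exact: normr_measurable.
have mTh := is_Theta_measurable ThP.
by rewrite (atomic_integral (G_atomic w) (@a_inj w) mTh mpow) ltey.
Qed.

Definition params i w := if (i < N)%N then a w i else c w (i - N)%N.

Lemma measurable_params i : (i < N + N)%N -> measurable_fun setT (params i).
Proof.
move=> iNN; rewrite /params; case: (ltnP i N) => [iN|Ni]; first exact: ma.
by apply: mc; rewrite ltn_subLR.
Qed.

Lemma params_near w w' h :
  (forall i, (i < N + N)%N -> `|params i w' - params i w| < h) ->
  forall i, (i < N)%N -> `|a w' i - a w i| < h /\ `|c w' i - c w i| < h.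
Proof.
move=> near i iN; split; first by have := near i (ltn_addr N iN); rewrite /params iN.
have := near (N + i)%N; rewrite ltn_add2l /params (ltnNge (N + i)) leq_addr addKn.
exact.
Qed.

Lemma measurable_preimage_near (U : set (probability R R)) :
  (forall w, U (G w) -> exists2 h : R, 0 < h & forall w',
    (forall i, (i < N)%N -> `|a w' i - a w i| < h /\ `|c w' i - c w i| < h) ->
    U (G w')) ->
  measurable (G @^-1` U).
Proof.
move=> U_open; apply: (coord_open_measurable measurable_params) => w /U_open[h h0 Uh].
by exists h => // w' /params_near; exact: Uh.
Qed.

Lemma measurable_weak_borel B : weak_borel Th B -> measurable (G @^-1` B).
Proof.
apply: g_sigma_preimage_measurable atomic_PTheta _ B => U weakU.
have : [set U | U `<=` PTheta Th /\ coord_open params (N + N) (G @^-1` U)] U.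
  apply: weakU; first exact: coord_open_topology atomic_PTheta.
  move=> _ [f [V [[b fb] f_cont oV ->]]]; split=> [Q []//|w [_ Vw]].
  have mf := subspace_continuous_measurable_fun (is_Theta_measurable ThP) f_cont.
  move: Vw; rewrite integral_G // => Vw.
  have /nbhs_ballP[e e0 ball_V] : nbhs (\sum_(i < N) c w i * f (a w i)) V.
    exact: open_nbhs_nbhs.
  have [h h0 sum_near] := weighted_sum_near fb f_cont (c w) (a_Th w) e0.
  exists h => // w' /params_near near; split; first exact: atomic_PTheta.
  rewrite integral_G //; apply: ball_V; rewrite /ball /= distrC.
  apply: sum_near => i iN; [exact: a_Th| |exact: near].
  rewrite ger0_norm ?c_ge0 //.
  exact: (atomic_weight_le1 (G_atomic w') (@a_inj w') (probability_setT _)).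
by case=> _ /(coord_open_measurable measurable_params).
Qed.

Lemma measurable_Wp_borel p : 1 <= p ->
  forall B, Wp_borel Th p B -> measurable (G @^-1` B).
Proof.
move=> p1; apply: g_sigma_preimage_measurable (atomic_Pp p) _ => U [_ U_open].
apply: measurable_preimage_near => w /U_open[e e0 Ue].
have [h h0 Wp_near] := Wp_atomic_near p1 (G_atomic w) (c_ge0 w) (c_sum1 w) e0.
exists h => // w' near; apply: Ue; first exact: atomic_Pp.
exact: Wp_near (G_atomic w') (c_ge0 w') (c_sum1 w') near.
Qed.

End RandomAtomicMeasure.

Theorem lemma5 (R : realType) (Th : set R) (n : nat)
  (H : nat -> nat -> probability R R)
  (d : measure_display) (Omega : measurableType d) (P : probability Omega R)
  (M : Omega -> nat -> nat -> R) (G : Omega -> probability R R) :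
  is_Theta Th ->
  (forall j l, (1 <= j <= n.+1)%N -> (1 <= l <= 2 ^ j - 1)%N -> odd l ->
     PTheta Th (H j l)) ->
  is_DSBA P Th n H M ->
  {ae P, forall w,
     (forall l1 l2, (1 <= l1 <= 2 ^ n - 1)%N -> (1 <= l2 <= 2 ^ n - 1)%N ->
        M w n l1 = M w n l2 -> l1 = l2) /\
     exists Q : probability R R,
       [/\ PTheta Th Q, finite_mean Q, regular_sba Th Q n &
           forall j l, (1 <= j <= n.+1)%N -> (1 <= l <= 2 ^ j - 1)%N ->
             sba Th Q j l = (M w j l)%:E]} ->
  (forall w A, measurable A -> G w A = Tn (M w) n A) ->
  (forall w, PTheta Th (G w)) /\
  (forall B, weak_borel Th B -> measurable (G @^-1` B)) /\
  (forall p : R, 1 <= p ->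
     (forall w, Pp Th p (G w)) /\
     (forall B, Wp_borel Th p B -> measurable (G @^-1` B))).
Proof.
move=> ThP _ [mM _ in_gap _ _] _ G_Tn.
have gap w i : (i < 2 ^ n)%N ->
    ocI (ext_entry Th (M w) n i) (ext_entry Th (M w) n i.+1) (atom (M w) n i).
  by move=> iN; apply: (in_gap w n.+1 i.+1); rewrite /= ?leqnn.
have m_atom i : (i < 2 ^ n)%N -> measurable_fun setT (fun w => atom (M w) n i).
  by move=> iN; apply: mM; rewrite ?leqnn // expnS; lia.
have m_wgt i : (i < 2 ^ n)%N -> measurable_fun setT (fun w => wgt (M w) n i.+1).
  move=> iN; apply: measurable_funB; apply: (measurable_Fv mM);
  by rewrite ?leqnn //; lia.
have G_atomic w : is_atomic (G w) (atom (M w) n) (fun i => wgt (M w) n i.+1) (2 ^ n).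
  by move=> A mA; rewrite G_Tn // TnE.
have a_Th w i : (i < 2 ^ n)%N -> Th (atom (M w) n i).
  exact: (atom_Th (gap w) ThP).
have a_inj w := atom_inj (gap w).
split; first exact: (atomic_PTheta ThP a_Th G_atomic).
split; first exact: (measurable_weak_borel ThP m_atom m_wgt a_Th a_inj G_atomic).
move=> p p1; split; first exact: (atomic_Pp ThP a_Th a_inj G_atomic p).
exact: (measurable_Wp_borel ThP m_atom m_wgt a_Th a_inj G_atomic p1).
Qed.
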